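(* Let $L$ be a normal incline and let $A\in M_n(L)$ be a symmetric matrix. Then the following are equivalent: (1) $A$ is positive semidefinite; (2) $A$ is completely positive; (3) every $2\times 2$ principal submatrix of $A$ has positive determinant greater than or equal to its negative determinant, i.e. $a_{ii}\otimes a_{jj}\ge a_{ij}\otimes a_{ji}$ for all $i,j$; (4) there exist a diagonal matrix $D\in M_n(L)$ and a symmetric matrix $M\in M_n(L)$ all of whose diagonal entries equal $\mathbf{1}$ such that $A=DMD$.
   Context: An incline is a nonempty set $L$ with binary operations $\oplus,\otimes$ such that $(L,\oplus)$ is a semilattice ($\oplus$ associative, commutative, idempotent), $(L,\otimes)$ is a semigroup, $x\otimes(y\oplus z)=(x\otimes y)\oplus(x\otimes z)$ and $x\oplus(x\otimes y)=x$ for all $x,y,z$. The order is $x\le y\iff x\oplus y=y$. $L$ is commutative if $\otimes$ is commutative. An r-ideal is a nonempty $J\subseteq L$ closed under $\oplus$ and under multiplication by arbitrary elements of $L$; a lattice ideal is a nonempty $J\subseteq L$ closed under $\oplus$ and downward closed for $\le$. A commutative incline $L$ is normal if it has an additive identity $\mathbf{0}$ and a multiplicative identity $\mathbf{1}$ and: (LI-property) every singly generated r-ideal of $L$ is a lattice ideal; (unique square root property) for every $x\in L$ there is a unique $c\in L$ with $c\otimes c=x$; (AG-property) $x\otimes y\le (x\otimes x)\oplus(y\otimes y)$ for all $x,y$. Matrices over $L$ are multiplied by $(BC)_{ij}=\bigoplus_k b_{ik}\otimes c_{kj}$ and added entrywise by $\oplus$; $B^T$ is the transpose. A matrix $A\in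 M_n(L)$ is positive semidefinite if $A=BB^T$ for some $n\times k$ matrix $B$ over $L$, and completely positive if moreover $B$ can be chosen with every entry a perfect square (of the form $c\otimes c$). For a $2\times 2$ matrix $\begin{bmatrix}p&q\\ r&s\end{bmatrix}$ the positive determinant is $p\otimes s$ and the negative determinant is $q\otimes r$. A diagonal matrix has all off-diagonal entries $\mathbf{0}$. *)

From mathcomp Require Import all_boot all_algebra.
Set Implicit Arguments. Unset Strict Implicit. Unset Printing Implicit Defensive.

Record incline := Incline {
  icarrier :> Type;
  iadd : icarrier -> icarrier -> icarrier;
  imul : icarrier -> icarrier -> icarrier;
  iaddA : forall x y z, iadd x (iadd y z) = iadd (iadd x y) z;
  iaddC : forall x y, iadd x y = iadd y x;
  iaddI : forall x, iadd x x = x;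
  imulA : forall x y z, imul x (imul y z) = imul (imul x y) z;
  imulDr : forall x y z, imul x (iadd y z) = iadd (imul x y) (imul x z);
  iabsorb : forall x y, iadd x (imul x y) = x
}.

Section InclineNotions.
Variable L : incline.

Definition ile (x y : L) : Prop := iadd x y = y.

Definition is_square (x : L) : Prop := exists c : L, imul c c = x.

Definition r_ideal (J : L -> Prop) : Prop :=
  (exists x, J x) /\
  (forall x y, J x -> J y -> J (iadd x y)) /\
  (forall x y, J x -> J (imul x y) /\ J (imul y x)).

Definition lattice_ideal (J : L -> Prop) : Prop :=
  (exists x, J x) /\
  (forall x y, J x -> J y -> J (iadd x y)) /\
  (forall x y, J y -> ile x y -> J x).

Definition gen_r_ideal (a : L) : L -> Prop :=
  fun x => forall J, r_ideal J -> J a -> J x.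

Definition LI_property : Prop := forall a : L, lattice_ideal (gen_r_ideal a).

Definition unique_square_root_property : Prop :=
  forall x : L, exists! c : L, imul c c = x.

Definition AG_property : Prop :=
  forall x y : L, ile (imul x y) (iadd (imul x x) (imul y y)).

Definition is_additive_identity (z : L) : Prop := forall x, iadd z x = x /\ iadd x z = x.
Definition is_multiplicative_identity (o : L) : Prop := forall x, imul o x = x /\ imul x o = x.
Definition commutative_incline : Prop := forall x y : L, imul x y = imul y x.

End InclineNotions.

Record normal_incline := NormalIncline {
  ni_incline :> incline;
  izero : ni_incline;
  ione : ni_incline;
  ni_comm : commutative_incline ni_incline;
  ni_zero : is_additive_identity izero;
  ni_one : is_multiplicative_identity ione;
  ni_LI : LI_property ni_incline;
  ni_usqrt : unique_square_root_property ni_incline;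
  ni_AG : AG_property ni_incline
}.

Section Matrices.
Variable L : normal_incline.

Definition imxmul m n p (B : 'M[L]_(m, n)) (C : 'M[L]_(n, p)) : 'M[L]_(m, p) :=
  \matrix_(i < m, j < p) \big[@iadd L / izero L]_(k < n) imul (B i k) (C k j).

Definition isymmetric n (A : 'M[L]_n) : Prop := trmx A = A.

Definition positive_semidefinite n (A : 'M[L]_n) : Prop :=
  exists k (B : 'M[L]_(n, k)), A = imxmul B (trmx B).

Definition completely_positive n (A : 'M[L]_n) : Prop :=
  exists k (B : 'M[L]_(n, k)), A = imxmul B (trmx B) /\ forall i j, is_square (B i j).

Definition idiagonal n (D : 'M[L]_n) : Prop :=
  forall i j : 'I_n, i != j -> D i j = izero L.

Definition pos_det (M : 'M[L]_2) : L := imul (M ord0 ord0) (M ord_max ord_max).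
Definition neg_det (M : 'M[L]_2) : L := imul (M ord0 ord_max) (M ord_max ord0).

Definition principal2 n (A : 'M[L]_n) (i j : 'I_n) : 'M[L]_2 :=
  \matrix_(a < 2, b < 2)
    A (if a == 0 :> nat then i else j) (if b == 0 :> nat then i else j).

End Matrices.

From HB Require Import structures.
From mathcomp Require Import all_boot all_algebra.
From Stdlib Require Import ClassicalEpsilon.

Set Implicit Arguments.
Unset Strict Implicit.
Local Open Scope ring_scope.

(* Every element of a normal incline is a square, so positive semidefinite and
   completely positive matrices coincide.  For a Gram matrix A = B B^T, the
   AG-property bounds each term of a_ij a_ji by a_ii a_jj.  Conversely, write
   a_ii = d_i d_i; the minor condition gives a_ij a_ij <= (d_i d_j)(d_i d_j),
   hence a_ij <= d_i d_j (AG and uniqueness of square roots make squaring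
   order-reflecting), and the LI-property factors a_ij = d_i d_j m_ij: this is
   A = DMD.  Finally DMD is a Gram matrix whose columns, indexed by pairs
   (k, l), are d_k e_k + m_kl d_l e_l: the outer product of each column is
   dominated by DMD, and the (i, j)-th one attains d_i m_ij d_j. *)

Local Notation "x ⊕ y" := (iadd x y) (at level 50, left associativity).
Local Notation "x ⊗ y" := (imul x y) (at level 40, left associativity).
Local Notation "x ≼ y" := (ile x y) (at level 70).

Section InclineOrder.
Variable L : incline.
Implicit Types x y z : L.

Lemma ile_refl x : x ≼ x. Proof. exact: iaddI. Qed.

Lemma ile_trans y x z : x ≼ y -> y ≼ z -> x ≼ z.
Proof. by rewrite /ile => xy yz; rewrite -yz iaddA xy. Qed.

Lemma ile_anti x y : x ≼ y -> y ≼ x -> x = y.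
Proof. by rewrite /ile => xy yx; rewrite -xy iaddC yx. Qed.

Lemma iadd_ile x y z : x ≼ z -> y ≼ z -> x ⊕ y ≼ z.
Proof. by rewrite /ile => xz yz; rewrite -iaddA yz xz. Qed.

Lemma ile_iaddl x y : x ≼ x ⊕ y.
Proof. by rewrite /ile iaddA iaddI. Qed.

Lemma ile_iaddr x y : y ≼ x ⊕ y.
Proof. by rewrite iaddC; apply: ile_iaddl. Qed.

Lemma ile_imul2l z x y : x ≼ y -> z ⊗ x ≼ z ⊗ y.
Proof. by rewrite /ile => xy; rewrite -imulDr xy. Qed.

Lemma imul_ilel x y : x ⊗ y ≼ x.
Proof. by rewrite /ile iaddC iabsorb. Qed.

End InclineOrder.

Section NormalIncline.
Variable L : normal_incline.
Local Notation O := (izero L).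
Local Notation I := (ione L).
Implicit Types x y z p q r s : L.

Lemma iadd0l x : O ⊕ x = x. Proof. exact: (ni_zero x).1. Qed.
Lemma imulC x y : x ⊗ y = y ⊗ x. Proof. exact: ni_comm. Qed.
Lemma imul1l x : I ⊗ x = x. Proof. exact: (ni_one x).1. Qed.
Lemma imul1r x : x ⊗ I = x. Proof. exact: (ni_one x).2. Qed.

Lemma imul0l x : O ⊗ x = O.
Proof. by have := iabsorb O x; rewrite iadd0l. Qed.

Lemma imul0r x : x ⊗ O = O.
Proof. by rewrite imulC imul0l. Qed.

Lemma imulDl x y z : (x ⊕ y) ⊗ z = x ⊗ z ⊕ y ⊗ z.
Proof. by rewrite imulC imulDr !(imulC z). Qed.

Lemma imulACA p q r s : p ⊗ q ⊗ (r ⊗ s) = p ⊗ r ⊗ (q ⊗ s).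
Proof. by rewrite -!imulA (imulA q) (imulC q r) -imulA. Qed.

HB.instance Definition _ := Monoid.isComLaw.Build L O (@iadd L) (@iaddA L) (@iaddC L) iadd0l.
HB.instance Definition _ := Monoid.isMulLaw.Build L O (@imul L) imul0l imul0r.
HB.instance Definition _ := Monoid.isAddLaw.Build L (@imul L) (@iadd L) imulDl (@imulDr L).

Lemma ile0 x : O ≼ x. Proof. exact: iadd0l. Qed.

Lemma ile1 x : x ≼ I.
Proof. by have := iabsorb I x; rewrite imul1l /ile iaddC. Qed.

Lemma imul_iler x y : x ⊗ y ≼ y.
Proof. by rewrite imulC; apply: imul_ilel. Qed.

Lemma ile_imul x y u v : x ≼ y -> u ≼ v -> x ⊗ u ≼ y ⊗ v.
Proof.
move=> xy uv; apply: (ile_trans (y := x ⊗ v)); first exact: ile_imul2l.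
by rewrite (imulC x) (imulC y); apply: ile_imul2l.
Qed.

Lemma is_square_all x : is_square x.
Proof. by have [c [cc _]] := ni_usqrt x; exists c. Qed.

Lemma imul4_ile p q r s : p ⊗ q ⊗ (r ⊗ s) ≼ p ⊗ p ⊗ (r ⊗ r) ⊕ q ⊗ q ⊗ (s ⊗ s).
Proof. by rewrite imulACA -(imulACA p r p r) -(imulACA q s q s); apply: ni_AG. Qed.

(* By AG, if x x <= y y then (x + y)(x + y) = y y, so x + y = y is the unique
   square root of y y. *)
Lemma ile_of_sqr x y : x ⊗ x ≼ y ⊗ y -> x ≼ y.
Proof.
move=> le_sqr.
have sqr_xy : (x ⊕ y) ⊗ (x ⊕ y) = y ⊗ y.
  have AG := ni_AG x y; rewrite le_sqr in AG.
  rewrite imulDl !imulDr !iaddA; apply: ile_anti; last exact: ile_iaddr.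
  apply/iadd_ile/ile_refl; apply: iadd_ile; first exact: iadd_ile.
  by rewrite imulC.
have [c [_ uniq_c]] := ni_usqrt (y ⊗ y).
by rewrite /ile -(uniq_c _ sqr_xy); apply: uniq_c.
Qed.

Lemma ile_dvd x y : x ≼ y -> exists c, x = y ⊗ c.
Proof.
move=> xy; have [_ [_ down_closed]] := ni_LI y.
have gen_x : gen_r_ideal y x by apply: down_closed xy => J _.
apply: (gen_x (fun z => exists c, z = y ⊗ c)); last by exists I; rewrite imul1r.
split; first by exists y, I; rewrite imul1r.
split; first by move=> _ _ [c ->] [c' ->]; exists (c ⊕ c'); rewrite imulDr.
move=> _ z [c ->]; split; exists (c ⊗ z); first by rewrite imulA.
by rewrite imulC imulA.
Qed.

Definition isqrt x : L := epsilon (inhabits O) (fun c => c ⊗ c = x).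

Definition idiv x y : L := epsilon (inhabits O) (fun c => x = y ⊗ c).

Lemma isqrtK x : isqrt x ⊗ isqrt x = x.
Proof. exact: epsilon_spec _ (fun c => c ⊗ c = x) (is_square_all x). Qed.

Lemma idivK x y : x ≼ y -> y ⊗ idiv x y = x.
Proof. by move=> /ile_dvd /(epsilon_spec (inhabits O)). Qed.

Section BigJoin.
Variables (T : finType) (F : T -> L).

Lemma big_ile c : (forall k, F k ≼ c) -> \big[@iadd L/O]_k F k ≼ c.
Proof. by move=> Fc; elim/big_rec: _ => [|k s _]; [apply: ile0 | apply: iadd_ile]. Qed.

Lemma ile_big k : F k ≼ \big[@iadd L/O]_k F k.
Proof. by rewrite (bigD1 k) //=; apply: ile_iaddl. Qed.

Lemma big_attained c k : (forall k, F k ≼ c) -> F k = c -> \big[@iadd L/O]_k F k = c.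
Proof. by move=> Fc Fkc; apply: ile_anti; [apply: big_ile | rewrite -Fkc; apply: ile_big]. Qed.

Lemma big_only k : (forall l, l != k -> F l = O) -> \big[@iadd L/O]_l F l = F k.
Proof. by move=> F0; rewrite (bigD1 k) //= big1 // iaddC iadd0l. Qed.

End BigJoin.

Variable n : nat.
Implicit Types A D M : 'M[L]_n.

Definition minor2_dominated A := forall i j, A i j ⊗ A j i ≼ A i i ⊗ A j j.

Definition dmd_factorization A := exists D M : 'M[L]_n,
  idiagonal D /\ isymmetric M /\ (forall i, M i i = I) /\ A = imxmul (imxmul D M) D.

Lemma principal2_dominatedE A :
  (forall i j, neg_det (principal2 A i j) ≼ pos_det (principal2 A i j)) <->
  minor2_dominated A.
Proof. by split=> dom i j; have := dom i j; rewrite /neg_det /pos_det !mxE. Qed.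

Lemma isymmetricE A : isymmetric A -> forall i j, A j i = A i j.
Proof. by move=> symA i j; rewrite -{1}symA mxE. Qed.

Lemma imxmul_diag_entry D M i j :
  idiagonal D -> imxmul (imxmul D M) D i j = D i i ⊗ M i j ⊗ D j j.
Proof.
move=> diagD; rewrite !mxE (big_only (k := j)) => [|k kj]; last first.
  by rewrite diagD ?imul0r.
rewrite mxE (big_only (k := i)) // => k ki.
by rewrite diagD ?imul0l // eq_sym.
Qed.

Lemma psd_completely_positive A :
  positive_semidefinite A <-> completely_positive A.
Proof.
split=> [[k [B ->]]|[k [B [-> _]]]]; last by exists k, B.
by exists k, B; split=> // i j; apply: is_square_all.
Qed.

Lemma gram_diag_ile m (B : 'M[L]_(n, m)) i k : B i k ⊗ B i k ≼ imxmul B (trmx B) i i.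
Proof. by rewrite !mxE; have := ile_big (fun l => B i l ⊗ trmx B l i) k; rewrite mxE. Qed.

Lemma psd_minor2 A : positive_semidefinite A -> minor2_dominated A.
Proof.
move=> [m [B ->]] i j; set G := imxmul B (trmx B).
rewrite [G i j]mxE [G j i]mxE big_distrlr /=.
apply: big_ile => a; apply: big_ile => b; rewrite ![trmx B _ _]mxE.
apply: ile_trans (imul4_ile _ _ _ _) _; apply: iadd_ile.
  exact: ile_imul (gram_diag_ile _ _ _) (gram_diag_ile _ _ _).
by rewrite [X in _ ≼ X]imulC; apply: ile_imul (gram_diag_ile _ _ _) (gram_diag_ile _ _ _).
Qed.

Lemma dmd_minor2 A : dmd_factorization A -> minor2_dominated A.
Proof.
move=> [D [M [diagD [_ [M1 ->]]]]] i j.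
have dmd_ile k l : D k k ⊗ M k l ⊗ D l l ≼ D k k ⊗ D l l.
  by apply: ile_imul (ile_refl _); rewrite -[X in _ ≼ X]imul1r; apply/ile_imul2l/ile1.
rewrite !imxmul_diag_entry // !M1 !imul1r.
apply: ile_trans (ile_imul (dmd_ile i j) (dmd_ile j i)) _.
by rewrite (imulC (D j j)) imulACA; apply: ile_refl.
Qed.

Lemma minor2_dmd A : isymmetric A -> minor2_dominated A -> dmd_factorization A.
Proof.
move=> symA domA; pose d i := isqrt (A i i).
exists (\matrix_(i, j) if i == j then d i else O),
       (\matrix_(i, j) if i == j then I else idiv (A i j) (d i ⊗ d j)).
have diagD : idiagonal (\matrix_(i, j) if i == j then d i else O).
  by move=> i j ij; rewrite mxE (negbTE ij).
split=> //; split; last split.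
- apply/matrixP=> i j; rewrite !mxE eq_sym.
  by case: eqP=> // _; rewrite (isymmetricE symA) imulC.
- by move=> i; rewrite mxE eqxx.
apply/matrixP=> i j; rewrite imxmul_diag_entry // !mxE !eqxx.
case: eqP=> [<-|_]; first by rewrite imul1r isqrtK.
have le_Aij : A i j ≼ d i ⊗ d j.
  apply: ile_of_sqr; rewrite imulACA !isqrtK -{2}(isymmetricE symA).
  exact: domA.
by rewrite -imulA (imulC _ (d j)) imulA idivK.
Qed.

Section GramWitness.
Variables (d : 'I_n -> L) (M : 'M[L]_n).
Hypotheses (symM : isymmetric M) (M1 : forall i, M i i = I).

Definition gram_column (kl : 'I_n * 'I_n) (i : 'I_n) : L :=
  if i == kl.1 then d i else if i == kl.2 then M kl.1 kl.2 ⊗ d i else O.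

Definition gram_witness : 'M[L]_(n, #|{: 'I_n * 'I_n}|) :=
  \matrix_(i, c) gram_column (enum_val c) i.

Lemma gram_column_ile kl i j : gram_column kl i ⊗ gram_column kl j ≼ d i ⊗ M i j ⊗ d j.
Proof.
case: kl => k l; rewrite /gram_column /=.
have [->|_] := eqVneq i k.
  have [->|_] := eqVneq j k; first by rewrite M1 imul1r; apply: ile_refl.
  have [->|_] := eqVneq j l; last by rewrite imul0r; apply: ile0.
  by rewrite imulA; apply: ile_refl.
have [->|_] := eqVneq i l; last by rewrite imul0l; apply: ile0.
have [->|_] := eqVneq j k.
  by rewrite (isymmetricE symM l k) (imulC (M l k)); apply: ile_refl.
have [->|_] := eqVneq j l; last by rewrite imul0r; apply: ile0.
by rewrite M1 imul1r; apply: ile_imul; apply: imul_iler.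
Qed.

Lemma gram_column_attained i j :
  gram_column (i, j) i ⊗ gram_column (i, j) j = d i ⊗ M i j ⊗ d j.
Proof.
rewrite /gram_column /= eqxx.
by have [->|_] := eqVneq j i; [rewrite M1 imul1r | rewrite eqxx imulA].
Qed.

Lemma gram_witnessE i j : imxmul gram_witness (trmx gram_witness) i j = d i ⊗ M i j ⊗ d j.
Proof.
rewrite mxE; apply: (big_attained (k := enum_rank (i, j))) => [c|]; rewrite !mxE.
  exact: gram_column_ile.
by rewrite enum_rankK gram_column_attained.
Qed.

End GramWitness.

Lemma dmd_psd A : dmd_factorization A -> positive_semidefinite A.
Proof.
move=> [D [M [diagD [symM [M1 ->]]]]].
exists _, (gram_witness (fun i => D i i) M).
by apply/matrixP=> i j; rewrite gram_witnessE // imxmul_diag_entry.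
Qed.

End NormalIncline.

Theorem mainTheorem3 (L : normal_incline) (n : nat) (A : 'M[L]_n) :
  isymmetric A ->
  (positive_semidefinite A <-> completely_positive A) /\
  (completely_positive A <->
     (forall i j : 'I_n, ile (neg_det (principal2 A i j)) (pos_det (principal2 A i j)))) /\
  ((forall i j : 'I_n, ile (neg_det (principal2 A i j)) (pos_det (principal2 A i j))) <->
     exists D M : 'M[L]_n,
       idiagonal D /\ isymmetric M /\ (forall i, M i i = ione L) /\
       A = imxmul (imxmul D M) D).
Proof.
move=> symA; have psd_cp := psd_completely_positive A.
split=> //; split; split.
- by move=> /psd_cp /psd_minor2 /principal2_dominatedE.
- by move=> /principal2_dominatedE /(minor2_dmd symA) /dmd_psd /psd_cp.
- by move=> /principal2_dominatedE /(minor2_dmd symA).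
- by move=> /dmd_minor2 /principal2_dominatedE.
Qed.
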